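(* Let $X$ be a complex Banach space and $T:X\to X$ a bounded linear operator. Then: (i) for every $\lambda\in\mathbb C$ with $|\lambda|=1$ we have $\mathrm{Rec}(T)=\mathrm{Rec}(\lambda T)$; (ii) for every positive integer $p$ we have $\mathrm{Rec}(T)=\mathrm{Rec}(T^p)$. In particular, $T$ is recurrent if and only if $T^p$ is recurrent for every positive integer $p$, if and only if $\lambda T$ is recurrent for every $\lambda\in\mathbb T=\{z\in\mathbb C:|z|=1\}$.
   Context: A vector $x\in X$ is recurrent for $T$ if there is a strictly increasing sequence of positive integers $(k_n)$ with $T^{k_n}x\to x$; $\mathrm{Rec}(T)$ denotes the set of recurrent vectors of $T$. The operator $T$ is called recurrent if for every non-empty open set $U\subset X$ there is $k\in\mathbb N$ with $U\cap T^{-k}(U)\neq\emptyset$. *)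

From mathcomp Require Import all_boot all_algebra.
From mathcomp Require Import complex.
From mathcomp Require Import all_classical all_reals all_analysis.
Import GRing.Theory Num.Theory.
Import numFieldNormedType.Exports.
Local Open Scope ring_scope.
Local Open Scope classical_set_scope.

(* Complex Banach space: X : completeNormedModType R[i] with R : realType,
   so that the scalar field is the complex numbers R[i]. *)

Definition Rec {K : numDomainType} {X : normedModType K} (T : X -> X) : set X :=
  [set x | exists k : nat -> nat,
     (forall n, (0 < k n)%N) /\ {homo k : a b / (a < b)%N} /\
     (fun n => iter (k n) T x) @ \oo --> x].

Definition recurrent_op {K : numDomainType} {X : normedModType K} (T : X -> X) : Prop :=
  forall U : set X, open U -> U !=set0 ->
    exists k : nat, (0 < k)%N /\ U `&` (iter k T @^-1` U) !=set0.

Definition scale_op {K : numDomainType} {X : normedModType K} (l : K) (T : X -> X) : X -> X :=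
  fun x => l *: T x.

From mathcomp Require Import all_boot all_order all_algebra.
From mathcomp Require Import complex.
From mathcomp Require Import all_classical all_reals all_analysis.
Import Order.TTheory GRing.Theory Num.Theory.
Import numFieldNormedType.Exports.

(* Call [T] Q-returning after [N] if every open [V] with property [Q] contains
   a subset with property [Q] that returns into [V] at some time [k > N]
   (for [Q V := V x] this says that [x] is recurrent, for [Q V := V !=set0]
   that [T] is recurrent).  Nesting such subsets [V = U_0 ⊇ U_1 ⊇ ...] with
   [U_(j+1) = U_j ∩ T^-(g_j) U_j] gives times [s_0 < s_1 < ...] such that
   [V ∩ T^-(s_b - s_a) V] has property [Q] whenever [a < b]: the return times
   contain a whole difference set, hence meet every Δ*-set.  The multiples of
   [p] form a Δ*-set by pigeonholing [s_a mod p], and so do the [m] with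
   [λ^m] close to [1] for [|λ| = 1], since the powers [λ^(s_a)] lie in a
   compact set.  Returning at a multiple [m] of [p] is returning for [T^p] at
   time [m/p], and [λ^m T^m y] is close to [y] when [T^m y] is and [λ^m] is
   close to [1]; this gives [Rec T ⊆ Rec (T^p)] and [Rec T ⊆ Rec (λT)] and the
   same for recurrence of operators. *)

Set Implicit Arguments.
Unset Strict Implicit.
Unset Printing Implicit Defensive.

Local Open Scope ring_scope.
Local Open Scope classical_set_scope.

Lemma finite_pigeonhole (T : finType) (f : nat -> T) :
  exists a b, (a < b)%N /\ f a = f b.
Proof.
have /injectivePn[i [j ij fij]] : ~~ injectiveb (fun i : 'I_#|T|.+1 => f i).
  by apply/injectiveP => /leq_card; rewrite card_ord ltnn.
case: (ltngtP i j) => [lt_ij|lt_ji|/val_inj eq_ij].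
- by exists i, j.
- by exists j, i.
- by rewrite eq_ij eqxx in ij.
Qed.

Lemma compact_close_pair {K : numFieldType} {Y : pseudoMetricType K} (A : set Y)
    (z : nat -> Y) : compact A -> (forall n, A (z n)) ->
  forall e : K, 0 < e -> exists a b, (a < b)%N /\ ball (z a) e (z b).
Proof.
move=> cA Az e e0.
have [p [_ clp]] : A `&` cluster (z @ \oo) !=set0.
  by apply: cA; exists 0%N => [//|n _]; exact: Az.
have e20 : 0 < e / 2 by rewrite divr_gt0.
have often N : exists2 n, (N <= n)%N & ball p (e / 2) (z n).
  have [|_ [[n Nn <-] pn]] := clp (z @` [set n | (N <= n)%N]) _ _ (nbhsx_ballx p _ e20).
    by exists N => // n /= Nn; exists n.
  by exists n.
have [a _ pa] := often 0%N; have [b ab pb] := often a.+1.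
by exists a, b; split => //; rewrite (splitr e); exact: ball_triangle (ball_sym pa) pb.
Qed.

Definition delta_star (P : set nat) : Prop :=
  forall s : nat -> nat, {homo s : a b / (a < b)%N} ->
    exists a b, (a < b)%N /\ P (s b - s a)%N.

Lemma delta_star_dvdn p : (0 < p)%N -> delta_star [set m | (p %| m)%N].
Proof.
move=> p0 s s_incr.
have [a [b [ab /(congr1 val) /= eq_mod]]] :=
  @finite_pigeonhole 'I_p (fun n => Ordinal (ltn_pmod (s n) p0)).
exists a, b; split => //=.
by rewrite -eqn_mod_dvd; [rewrite eq_mod | rewrite (leq_mono s_incr) ltnW].
Qed.

Section UnitCircle.
Context {R : realType}.
Local Open Scope complex_scope.

Lemma gt0_real_complex (e : R[i]) : 0 < e -> exists2 r : R, 0 < r & e = r%:C.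
Proof. by case: e => a b; rewrite ltcE /= => /andP[/eqP -> a0]; exists a. Qed.

Lemma norm_real_complex (x : R) : `|x%:C| = `|x|%:C.
Proof. by rewrite normc_def /= expr0n addr0 sqrtr_sqr. Qed.

(* The scalar field [R[i]] carries its normed topology through the alias [R[i]^o]. *)
Lemma real_complex_continuous : continuous (fun x : R => x%:C : R[i]^o).
Proof.
move=> x; apply/cvgrPdist_lt => _ /gt0_real_complex[r r0 ->].
near=> y; rewrite -rmorphB norm_real_complex ltcR.
near: y; exact: (@nbhsx_ballx _ R^o x r r0).
Unshelve. all: by end_near. Qed.

Lemma unit_circle_sub_compact :
  exists2 C : set R[i]^o, compact C & forall z : R[i], `|z| = 1 -> C z.
Proof.
pose f (p : R * R) : R[i]^o := p.1%:C + 'i * p.2%:C.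
have f_cont : continuous f.
  move=> p; apply: cvgD; last apply: cvgMr.
    by apply: continuous_comp; [exact: cvg_fst | exact: real_complex_continuous].
  by apply: continuous_comp; [exact: cvg_snd | exact: real_complex_continuous].
exists (f @` (`[-1, 1] `*` `[-1, 1])).
  apply: continuous_compact; first exact: continuous_subspaceT f_cont.
  by apply: compact_setX; exact: segment_compact.
move=> z z1; exists (complex.Re z, complex.Im z); last by rewrite /f /= [RHS]complexE.
have Re_bound (w : R[i]) : `|w| = 1 -> `[-1, 1]%classic (complex.Re w).
  move=> w1; rewrite /= in_itv /= -ler_norml -lecR.
  by apply: le_trans (normc_ge_Re w) _; rewrite w1.
split; first exact: Re_bound.
have -> : complex.Im z = - complex.Re (z * 'i) by rewrite ReiNIm opprK.
have /Re_bound : `|z * 'i| = 1.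
  by rewrite normrM z1 mul1r normc_def /= expr0n expr1n add0r sqrtr1.
by rewrite /= !in_itv /= -!ler_norml normrN.
Qed.

Lemma delta_star_unit_power (l : R[i]) (A : set R[i]^o) :
  `|l| = 1 -> nbhs (1 : R[i]^o) A -> delta_star [set m | A (l ^+ m)].
Proof.
move=> l1 /nbhs_ballP[e e0 eA] s s_incr.
have [C cC Cl] := unit_circle_sub_compact.
have lsC n : C (l ^+ s n) by apply: Cl; rewrite normrX l1 expr1n.
have [a [b [ab]]] := compact_close_pair cC lsC e0.
rewrite -ball_normE /= => close_ab.
exists a, b; split => //; apply: eA; rewrite -ball_normE /=.
have split_sb : l ^+ s b = l ^+ s a * l ^+ (s b - s a)%N.
  by rewrite -exprD subnKC // (leq_mono s_incr) ltnW.
move: close_ab; rewrite split_sb -{1}(mulr1 (l ^+ s a)) -mulrBr normrM.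
by rewrite normrX l1 expr1n mul1r.
Qed.
End UnitCircle.

Definition returns_after {Y : topologicalType} (T : Y -> Y) (Q : set Y -> Prop)
    (N : nat) : Prop :=
  forall V : set Y, open V -> Q V -> exists k, (N < k)%N /\ Q (V `&` iter k T @^-1` V).

Section ReturnTimes.
Context {Y : topologicalType} {T : Y -> Y} {Q : set Y -> Prop}.
Hypothesis T_cont : continuous T.
Hypothesis Q_mono : forall W W', Q W -> W `<=` W' -> Q W'.

Lemma iter_continuous n : continuous (iter n T).
Proof. by elim: n => [|n IH] x //=; apply: continuous_comp; [exact: IH|exact: T_cont]. Qed.

Lemma open_iter_preimage n (W : set Y) : open W -> open (iter n T @^-1` W).
Proof. by apply: open_comp => x _; exact: iter_continuous. Qed.

Lemma nested_return_times N : returns_after T Q N ->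
  forall V, open V -> Q V -> exists s : nat -> nat,
    (forall a, s a + N < s a.+1)%N /\
    forall a b, (a < b)%N -> Q (V `&` iter (s b - s a) T @^-1` V).
Proof.
move=> hQ V oV QV.
have /choice[F hF] : forall W, exists k, open W /\ Q W ->
    (N < k)%N /\ Q (W `&` iter k T @^-1` W).
  move=> W; have [[oW QW]|] := pselect (open W /\ Q W); last by exists 0%N.
  by have [k hk] := hQ W oW QW; exists k.
pose U := fix U j := if j is j'.+1 then U j' `&` iter (F (U j')) T @^-1` U j' else V.
pose s := fix s j := if j is j'.+1 then (s j' + F (U j'))%N else 0%N.
have UQ j : open (U j) /\ Q (U j).
  elim: j => [|j [oU QU]] //=; have [_ QU'] := hF _ (conj oU QU).
  by split => //; apply: openI => //; exact: open_iter_preimage.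
have U_sub : {homo U : a b / (a <= b)%N >-> b `<=` a}.
  apply: homo_leq => [A|B A C AB BC|j]; first exact: subset_refl.
    exact: subset_trans BC AB.
  exact: subIsetl.
have s_mono : {homo s : a b / (a <= b)%N}.
  by apply: homo_leq => [//|n m p|j]; [exact: leq_trans|exact: leq_addr].
have U_return a b : (a <= b)%N -> U b `<=` iter (s b - s a) T @^-1` U a.
  elim: b => [|b IH]; first by rewrite leqn0 => /eqP -> y; rewrite subnn.
  rewrite leq_eqVlt ltnS => /predU1P[<- y|ab y [_ Ubty]]; first by rewrite subnn.
  by rewrite /= -addnBAC ?s_mono // iterD; exact: IH.
exists s; split => [a|a b ab]; first by rewrite /= ltn_add2l; have [] := hF _ (UQ a).
apply: Q_mono (UQ b).2 _ => y Uby; split; first exact: (U_sub 0%N b).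
by apply: (U_sub 0%N a) => //; exact: U_return (ltnW ab) _ Uby.
Qed.

Lemma return_time_in_delta_star P N : delta_star P -> returns_after T Q N ->
  forall V, open V -> Q V -> exists m, [/\ (N < m)%N, P m & Q (V `&` iter m T @^-1` V)].
Proof.
move=> hP hQ V oV QV; have [s [s_gap s_ret]] := nested_return_times hQ oV QV.
have s_incr : {homo s : a b / (a < b)%N}.
  by apply: homo_ltn => [a b c|a]; [exact: ltn_trans|exact: leq_ltn_trans (leq_addr N _) _].
have [a [b [ab Pab]]] := hP s s_incr.
exists (s b - s a)%N; split => //; last exact: s_ret.
by rewrite ltn_subRL (leq_trans (s_gap a)) // (leq_mono s_incr).
Qed.

Lemma returns_after_iter p N : (0 < p)%N ->
  returns_after T Q (N * p) -> returns_after (iter p T) Q N.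
Proof.
move=> p0 hQ V oV QV.
have [m [Nm pm Qm]] := return_time_in_delta_star (delta_star_dvdn p0) hQ oV QV.
exists (m %/ p)%N; split; first by rewrite -(ltn_pmul2r p0) divnK.
by have -> : iter (m %/ p) (iter p T) = iter m T by apply/funext => y; rewrite -iterM divnK.
Qed.

Lemma returns_after_of_iter p N : (0 < p)%N ->
  returns_after (iter p T) Q N -> returns_after T Q N.
Proof.
move=> p0 hQ V oV QV; have [k [Nk Qk]] := hQ V oV QV.
exists (k * p)%N; split; first by rewrite (leq_trans Nk) // leq_pmulr.
by have -> : iter (k * p) T = iter k (iter p T) by apply/funext => y; rewrite iterM.
Qed.
End ReturnTimes.

Section Operators.
Context {R : realType} {X : normedModType R[i]}.
Implicit Types (T : X -> X) (l : R[i]).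

Lemma RecE T x : Rec T x <-> forall N, returns_after T (fun V => V x) N.
Proof.
split.
- case=> k [k_gt0 [k_incr k_cvg]] N V oV Vx.
  have [M _ hM] := k_cvg V (open_nbhs_nbhs (conj oV Vx)).
  exists (k (maxn M N.+1)); split; last by split => //; apply: hM; rewrite /= leq_maxl.
  have k_ge n : (n <= k n)%N by elim: n => // n IH; exact: leq_ltn_trans IH (k_incr _ _ _).
  exact: leq_trans (leq_maxr M N.+1) (k_ge _).
- move=> hx.
  have /choice[F hF] : forall nN : nat * nat,
      exists k, (nN.2 < k)%N /\ `|x - iter k T x| < (nN.1.+1%:R^-1)%:C%C.
    move=> [n N]; have r0 : 0 < (n.+1%:R^-1)%:C%C :> R[i] by rewrite ltcR invr_gt0.
    have [k [Nk [_]]] := hx N _ (ball_open x _) (ballxx x r0).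
    by move=> close_k; exists k; split => //; move: close_k; rewrite /= -ball_normE.
  pose k := fix k n := if n is n'.+1 then F (n, k n') else F (0, 0)%N.
  have k_step n : (k n < k n.+1)%N by have [] := hF (n.+1, k n).
  have k_close n : `|x - iter (k n) T x| < (n.+1%:R^-1)%:C%C.
    by case: n => [|n]; [have [] := hF (0, 0)%N|have [] := hF (n.+1, k n)].
  exists k; split.
    by case=> [|n]; [have [] := hF (0, 0)%N|exact: leq_ltn_trans (k_step n)].
  split; first by apply: homo_ltn k_step => a b c; exact: ltn_trans.
  apply/cvgrPdist_lt => _ /gt0_real_complex[r r0 ->]; near=> n.
  apply: lt_le_trans (k_close n) _; rewrite lecR ltW //.
  by near: n; exact: near_infty_natSinv_lt (PosNum r0).
Unshelve. all: by end_near. Qed.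

Lemma iter_scale_op T l m x : scalable T ->
  iter m (scale_op l T) x = l ^+ m *: iter m T x.
Proof.
move=> T_lin; elim: m => [|m IH] /=; first by rewrite expr0 scale1r.
by rewrite IH /scale_op T_lin scalerA exprS.
Qed.

Lemma returns_after_scale T l (Q : set X -> Prop) N :
  continuous T -> scalable T -> `|l| = 1 ->
  (forall U, Q U -> exists2 y, U y & forall V, V y -> Q V) ->
  returns_after T Q N -> returns_after (scale_op l T) Q N.
Proof.
move=> T_cont T_lin l1 Q_pt hQ U oU /Q_pt[y Uy Qy].
have Q_mono W W' : Q W -> W `<=` W' -> Q W' by move=> /Q_pt[z Wz Qz] WW'; exact/Qz/WW'.
have [[A B] /= [A1 By] AB] : \forall z \near (1 : R[i]^o, y), U (z.1 *: z.2).
  by apply: scale_continuous; rewrite /= scale1r; exact: open_nbhs_nbhs.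
move: By; rewrite nbhsE => -[V [oV Vy] VB].
have [m [Nm Am Qm]] := return_time_in_delta_star T_cont Q_mono
  (delta_star_unit_power l1 A1) hQ oV (Qy V Vy).
exists m; split => //; apply: Q_mono Qm _ => w [Vw Vmw]; split.
  by rewrite -[w]scale1r; apply: (AB (1, w)); split; [exact: nbhs_singleton A1|exact: VB].
by rewrite /preimage /= iter_scale_op //; apply: (AB (_, _)); split; [exact: Am|exact: VB].
Qed.

Lemma Rec_iter T p : continuous T -> (0 < p)%N -> Rec T = Rec (iter p T).
Proof.
move=> T_cont p0; apply/seteqP; split => x /RecE hx; apply/RecE => N.
  have x_mono (W W' : set X) : W x -> W `<=` W' -> W' x by move=> Wx; apply.
  exact/(returns_after_iter T_cont x_mono p0)/hx.
exact/(returns_after_of_iter p0)/hx.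
Qed.

Lemma Rec_scale_sub T l : continuous T -> scalable T -> `|l| = 1 ->
  Rec T `<=` Rec (scale_op l T).
Proof.
move=> T_cont T_lin l1 x /RecE hx; apply/RecE => N.
by apply: returns_after_scale T_cont T_lin l1 _ (hx N) => U Ux; exists x.
Qed.

Lemma Rec_scale T l : continuous T -> scalable T -> `|l| = 1 ->
  Rec T = Rec (scale_op l T).
Proof.
move=> T_cont T_lin l1; apply/seteqP; split; first exact: Rec_scale_sub.
have l_neq0 : l != 0 by rewrite -normr_eq0 l1 oner_neq0.
have scale_opK : scale_op l^-1 (scale_op l T) = T.
  by apply/funext => x; rewrite /scale_op scalerA mulVf // scale1r.
rewrite -{2}scale_opK.
apply: Rec_scale_sub; last by rewrite normfV l1 invr1.
  by move=> x; apply: continuous_comp; [exact: T_cont|exact: scaler_continuous].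
by move=> a x; rewrite /scale_op T_lin !scalerA mulrC.
Qed.

Lemma recurrent_op_iter T p : continuous T -> (0 < p)%N ->
  recurrent_op T -> recurrent_op (iter p T).
Proof.
move=> T_cont p0.
have ne_mono (W W' : set X) : W !=set0 -> W `<=` W' -> W' !=set0.
  by move=> [w Ww] WW'; exists w; exact: WW'.
exact: (@returns_after_iter _ T (fun W => W !=set0) T_cont ne_mono p 0 p0).
Qed.

Lemma recurrent_op_scale T l : continuous T -> scalable T -> `|l| = 1 ->
  recurrent_op T -> recurrent_op (scale_op l T).
Proof.
move=> T_cont T_lin l1; apply/(returns_after_scale T_cont T_lin l1).
by move=> U [y Uy]; exists y => // V Vy; exists y.
Qed.
End Operators.

Theorem proposition2p3 (R : realType) (X : completeNormedModType R[i])
    (T : {linear X -> X}) (hT : continuous T) :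
  (forall l : R[i], `|l| = 1 -> Rec T = Rec (scale_op l T)) /\
  (forall p : nat, (0 < p)%N -> Rec T = Rec (iter p T)) /\
  (recurrent_op T <-> (forall p : nat, (0 < p)%N -> recurrent_op (iter p T))) /\
  (recurrent_op T <-> (forall l : R[i], `|l| = 1 -> recurrent_op (scale_op l T))).
Proof.
have T_lin : scalable T by move=> a x; rewrite linearZ.
split; [|split; [|split]].
- by move=> l; exact: Rec_scale.
- by move=> p; exact: Rec_iter.
- split=> [hr p p0|]; first exact: recurrent_op_iter.
  by move/(_ 1%N isT).
- split=> [hr l l1|/(_ 1 (normr1 _))]; first exact: recurrent_op_scale.
  by congr recurrent_op; apply/funext => x; rewrite /scale_op scale1r.
Qed.
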